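(* Let $V$ be a real vector space of finite even dimension with nondegenerate quadratic form $Q$. Let $\rho$ be a $c$-compatible representation of $\mathbb{C}l(V)$ on a finite-dimensional complex vector space $K$ with nondegenerate hermitian form $(\cdot,\cdot)$. Let $\sigma=\mathrm{Ad}_b\circ c$ be an admissible real structure with $b$ in the complex Clifford group and $b$ real, i.e. $c(b)=b$. (1) If $b^\times=b$, then $(\cdot,\cdot)_b:=(\cdot,\rho(b)^{-1}\cdot)$ is a $\sigma$-compatible Krein product on $K$. (2) If $b^\times=-b$, then $(\cdot,\cdot)_b:=(\cdot,i\rho(b)^{-1}\cdot)$ is a $\sigma$-compatible Krein product on $K$.
   Context: $Cl(V,Q)$ is the real Clifford algebra with $v^2=+Q(v)$, $\mathbb{C}l(V)$ its complexification with complex conjugation $c$; $T$ is the linear antiautomorphism restricting to the identity on $V$; $a^\times=c(T(a))$. A real structure is an involutive antilinear algebra automorphism of $\mathbb{C}l(V)$ stabilizing $V^{\mathbb{C}}$; admissible means commuting with $c$; $\mathrm{Ad}_b(a)=bab^{-1}$; the complex Clifford group is the set of invertible $g$ with $gV^{\mathbb{C}}g^{-1}\subset V^{\mathbb{C}}$. For a real structure $\sigma$, $a^{\times_\sigma}=\sigma(T(a))$. $\rho$ is $c$-compatible if $(\rho(a)\psi,\phi)=(\psi,\rho(a^\times)\phi)$ for all $a,\psi,\phi$. A Krein product is a nondegenerate hermitian form; it is $\sigma$-compatible if $(\rho(a)\psi,\phi)'=(\psi,\rho(a^{\times_\sigma})\phi)'$ for all $a\in\mathbb{C}l(V)$, $\psi,\phi\in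 K$. *)

From HB Require Import structures.
From mathcomp Require Import all_boot all_order all_algebra.
From mathcomp Require Import complex.
Set Implicit Arguments. Unset Strict Implicit. Unset Printing Implicit Defensive.
Import Order.TTheory GRing.Theory Num.Theory.
Local Open Scope ring_scope.

Section Clifford.
Variables (R : rcfType) (n : nat).
Local Notation C := (R[i]).

Definition cplx_mx m p (M : 'M[R]_(m, p)) : 'M[C]_(m, p) := map_mx (fun x : R => (x%:C)%C) M.
Definition conj_vec (v : 'rV[C]_n) : 'rV[C]_n := map_mx (@conjc R) v.

Definition quad_form (Qm : 'M[R]_n) (v : 'rV[R]_n) : R := (v *m Qm *m v^T) 0 0.
Definition quad_formC (Qm : 'M[R]_n) (v : 'rV[C]_n) : C := (v *m cplx_mx Qm *m v^T) 0 0.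
Definition nondegenerate_quad (Qm : 'M[R]_n) : Prop := Qm^T = Qm /\ \det Qm != 0.

Definition alg_morph (A B : algType C) (f : A -> B) : Prop :=
  [/\ forall x y, f (x + y) = f x + f y,
      forall (z : C) x, f (z *: x) = z *: f x,
      forall x y, f (x * y) = f x * f y & f 1 = 1].

(* (A, gamma) is the complexified Clifford algebra Cl(V,Q)^C = Cl(V^C, Q^C),
   with the convention v^2 = + Q(v), given by its universal property. *)
Definition is_complex_clifford (Qm : 'M[R]_n) (A : unitAlgType C)
  (gamma : 'rV[C]_n -> A) : Prop :=
  [/\ forall (z : C) u v, gamma (z *: u + v) = z *: gamma u + gamma v,
      forall v, gamma v * gamma v = (quad_formC Qm v)%:A &
      forall (B : algType C) (f : 'rV[C]_n -> B),
        (forall (z : C) u v, f (z *: u + v) = z *: f u + f v) ->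
        (forall v, f v * f v = (quad_formC Qm v)%:A) ->
        exists g : A -> B, (alg_morph g /\ forall v, g (gamma v) = f v) /\
          forall g' : A -> B, alg_morph g' -> (forall v, g' (gamma v) = f v) ->
             forall a, g' a = g a].

Definition antilinear_morph (A : unitAlgType C) (s : A -> A) : Prop :=
  [/\ forall x y, s (x + y) = s x + s y,
      forall (z : C) x, s (z *: x) = conjc z *: s x,
      forall x y, s (x * y) = s x * s y & s 1 = 1].

(* c : complex conjugation of Cl(V)^C with respect to the real form Cl(V,Q):
   the antilinear algebra automorphism that is complex conjugation on V^C *)
Definition is_cconj (A : unitAlgType C) (gamma : 'rV[C]_n -> A) (c : A -> A) : Prop :=
  antilinear_morph c /\ forall v, c (gamma v) = gamma (conj_vec v).

Definition is_transpose (A : unitAlgType C) (gamma : 'rV[C]_n -> A) (T : A -> A) : Prop :=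
  [/\ forall x y, T (x + y) = T x + T y,
      forall (z : C) x, T (z *: x) = z *: T x,
      forall x y, T (x * y) = T y * T x, T 1 = 1 &
      forall v, T (gamma v) = gamma v].

Definition real_structure (A : unitAlgType C) (gamma : 'rV[C]_n -> A) (s : A -> A) : Prop :=
  [/\ antilinear_morph s, forall a, s (s a) = a &
      forall v, exists w, s (gamma v) = gamma w].
Definition admissible (A : unitAlgType C) (gamma : 'rV[C]_n -> A) (c s : A -> A) : Prop :=
  real_structure gamma s /\ forall a, s (c a) = c (s a).

Definition in_clifford_group (A : unitAlgType C) (gamma : 'rV[C]_n -> A) (g : A) : Prop :=
  g \is a GRing.unit /\ forall v, exists w, g * gamma v * g^-1 = gamma w.

End Clifford.

Section Forms.
Variables (R : rcfType) (d : nat).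
Local Notation C := (R[i]).
Local Notation K := ('cV[C]_d).

Definition sesquilinear (h : K -> K -> C) : Prop :=
  (forall x (z : C) y y', h x (z *: y + y') = z * h x y + h x y') /\
  (forall y (z : C) x x', h (z *: x + x') y = conjc z * h x y + h x' y).
Definition hermitian (h : K -> K -> C) : Prop :=
  sesquilinear h /\ forall x y, h y x = conjc (h x y).
Definition nondegenerate (h : K -> K -> C) : Prop :=
  forall x, (forall y, h x y = 0) -> x = 0.
Definition krein_product (h : K -> K -> C) : Prop := hermitian h /\ nondegenerate h.

Definition representation (A : unitAlgType C) (rho : A -> 'M[C]_d) : Prop :=
  [/\ forall x y, rho (x + y) = rho x + rho y,
      forall (z : C) x, rho (z *: x) = z *: rho x,
      forall x y, rho (x * y) = rho x *m rho y & rho 1 = 1%:M].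

Definition compatible (A : unitAlgType C) (rho : A -> 'M[C]_d) (dag : A -> A)
  (h : K -> K -> C) : Prop :=
  forall a psi phi, h (rho a *m psi) phi = h psi (rho (dag a) *m phi).

End Forms.

From Pilot Require Import Defs.
From HB Require Import structures.
From mathcomp Require Import all_boot all_order all_algebra.
From mathcomp Require Import complex.
From Stdlib Require Import FunctionalExtensionality.
Set Implicit Arguments. Unset Strict Implicit. Unset Printing Implicit Defensive.
Import Order.TTheory GRing.Theory Num.Theory.
Local Open Scope ring_scope.

(* Twisting a Krein product h by an invertible operator N, i.e. passing to
   (psi, phi) |-> h psi (N phi), gives a Krein product as soon as N is
   h-self-adjoint.  Compatibility of h with a |-> c(T a) makes rho(b) h-adjoint
   to rho(c(T b)) = +-rho(b), so rho(b)^-1 is self-adjoint, resp. skew-adjoint,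
   and then i rho(b)^-1 is self-adjoint.  The twisted form is compatible with
   a |-> b c(T a) b^-1 because rho(c(T a)) rho(b)^-1 = rho(b)^-1 rho(b c(T a) b^-1). *)

Lemma conjc_i (R : rcfType) : conjc ('i%C : R[i]) = - 'i%C.
Proof. by apply/eqP; rewrite eq_complex /= oppr0 !eqxx. Qed.

Section TwistedForm.
Variables (R : rcfType) (d : nat).
Local Notation C := (R[i]).
Local Notation K := ('cV[C]_d).
Variable h : K -> K -> C.

Definition twist_form (N : 'M[C]_d) : K -> K -> C :=
  fun psi phi => h psi (N *m phi).

Definition adjoint_mx (M M' : 'M[C]_d) : Prop :=
  forall x y, h (M *m x) y = h x (M' *m y).

Section Sesquilinear.
Hypothesis h_sesq : Defs.sesquilinear h.

Lemma sesquilinear0r x : h x 0 = 0.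
Proof.
have := h_sesq.1 x 1 0 0; rewrite scaler0 addr0 mul1r.
by move/esym/eqP; rewrite -subr_eq0 addrK => /eqP.
Qed.

Lemma sesquilinear0l y : h 0 y = 0.
Proof.
have := h_sesq.2 y 1 0 0; rewrite scaler0 addr0 conjc1 mul1r.
by move/esym/eqP; rewrite -subr_eq0 addrK => /eqP.
Qed.

Lemma sesquilinearZr x z y : h x (z *: y) = z * h x y.
Proof. by rewrite -[z *: y]addr0 h_sesq.1 sesquilinear0r addr0. Qed.

Lemma sesquilinearZl y z x : h (z *: x) y = conjc z * h x y.
Proof. by rewrite -[z *: x]addr0 h_sesq.2 sesquilinear0l addr0. Qed.

Lemma sesquilinear_twist N : Defs.sesquilinear (twist_form N).
Proof.
split=> [x z y y' | y z x x']; rewrite /twist_form; last exact: h_sesq.2.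
by rewrite mulmxDr -scalemxAr h_sesq.1.
Qed.

Lemma adjoint_mxZ z M M' :
  adjoint_mx M M' -> adjoint_mx (z *: M) (conjc z *: M').
Proof.
move=> adjM x y.
by rewrite -!scalemxAl sesquilinearZl sesquilinearZr adjM.
Qed.

End Sesquilinear.

Lemma adjoint_mx_inv M M' : M \in unitmx -> M' \in unitmx ->
  adjoint_mx M M' -> adjoint_mx (invmx M) (invmx M').
Proof. by move=> MU M'U adjM x y; rewrite -[in RHS](mulKVmx MU x) adjM mulKVmx. Qed.

Lemma nondegenerate_twist N : N \in unitmx ->
  Defs.nondegenerate h -> Defs.nondegenerate (twist_form N).
Proof. by move=> NU h_nd x hx0; apply: h_nd => y; rewrite -(mulKVmx NU y); exact: hx0. Qed.

Lemma hermitian_twist N : Defs.hermitian h -> adjoint_mx N N ->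
  Defs.hermitian (twist_form N).
Proof.
move=> [h_sesq h_herm] adjN; split; first exact: sesquilinear_twist.
by move=> x y; rewrite /twist_form -adjN h_herm.
Qed.

Lemma krein_product_twist N : N \in unitmx -> adjoint_mx N N ->
  krein_product h -> krein_product (twist_form N).
Proof.
move=> NU adjN [h_herm h_nd].
by split; [exact: hermitian_twist | exact: nondegenerate_twist].
Qed.

Lemma compatible_twist (A : unitAlgType C) (rho : A -> 'M[C]_d)
    (dag dag' : A -> A) N :
  compatible rho dag h ->
  (forall a, rho (dag a) *m N = N *m rho (dag' a)) ->
  compatible rho dag' (twist_form N).
Proof. by move=> h_comp intertwine a psi phi; rewrite /twist_form h_comp !mulmxA intertwine. Qed.

End TwistedForm.

Section Representation.
Variables (R : rcfType) (d : nat) (A : unitAlgType R[i]) (rho : A -> 'M[R[i]]_d).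
Hypothesis rho_rep : representation rho.

Lemma representationN a : rho (- a) = - rho a.
Proof. by case: rho_rep => _ rhoZ _ _; rewrite -scaleN1r rhoZ scaleN1r. Qed.

Lemma representation_mulV b : b \is a GRing.unit -> rho b *m rho b^-1 = 1%:M.
Proof. by case: rho_rep => _ _ rhoM rho1 bU; rewrite -rhoM mulrV. Qed.

Lemma representation_unitmx b : b \is a GRing.unit -> rho b \in unitmx.
Proof. move=> bU; exact: (mulmx1_unit (representation_mulV bU)).1. Qed.

Lemma invmx_representation b : b \is a GRing.unit -> invmx (rho b) = rho b^-1.
Proof.
move=> bU; have rbU := representation_unitmx bU.
by rewrite -[RHS](mulKmx rbU) representation_mulV // mulmx1.
Qed.

Lemma representation_conjg b a : b \is a GRing.unit ->
  rho a *m rho b^-1 = rho b^-1 *m rho (b * a * b^-1).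
Proof. by case: rho_rep => _ _ rhoM _ bU; rewrite -!rhoM !mulrA mulVr ?mul1r. Qed.

End Representation.

Theorem proposition9 (R : rcfType) (n : nat) (Qm : 'M[R]_n)
  (A : unitAlgType R[i]) (gamma : 'rV[R[i]]_n -> A) (c T : A -> A)
  (d : nat) (rho : A -> 'M[R[i]]_d) (h : 'cV[R[i]]_d -> 'cV[R[i]]_d -> R[i])
  (b : A) :
  ~~ odd n ->
  nondegenerate_quad Qm ->
  is_complex_clifford Qm gamma ->
  is_cconj gamma c ->
  is_transpose gamma T ->
  representation rho ->
  krein_product h ->
  compatible rho (fun a => c (T a)) h ->
  in_clifford_group gamma b ->
  c b = b ->
  admissible gamma c (fun a => b * c a * b^-1) ->
  (c (T b) = b ->
     let hb := fun psi phi => h psi (invmx (rho b) *m phi) in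
     krein_product hb /\ compatible rho (fun a => b * c (T a) * b^-1) hb) /\
  (c (T b) = - b ->
     let hb := fun psi phi => h psi (('i%C : R[i]) *: (invmx (rho b) *m phi)) in
     krein_product hb /\ compatible rho (fun a => b * c (T a) * b^-1) hb).
Proof.
move=> _ _ _ _ _ rho_rep h_krein h_comp [bU _] _ _.
set N := invmx (rho b).
have NU : N \in unitmx by rewrite unitmx_inv representation_unitmx.
have adj_b : adjoint_mx h (rho b) (rho (c (T b))) := h_comp b.
have intertwineN a : rho (c (T a)) *m N = N *m rho (b * c (T a) * b^-1).
  by rewrite /N (invmx_representation rho_rep bU) (representation_conjg rho_rep _ bU).
have h_sesq := h_krein.1.1.
split=> cTb /=; rewrite cTb in adj_b.
- have adjN : adjoint_mx h N N.
    by apply: adjoint_mx_inv; rewrite ?representation_unitmx.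
  split; first exact: krein_product_twist.
  exact: compatible_twist intertwineN.
- have adjN : adjoint_mx h N (- N).
    have nbU : - b \is a GRing.unit by rewrite unitrN.
    have := adjoint_mx_inv (representation_unitmx rho_rep bU)
      (representation_unitmx rho_rep nbU) adj_b.
    rewrite [invmx (rho (- b))]invmx_representation // invrN.
    by rewrite (representationN rho_rep) -invmx_representation.
  have adj_iN : adjoint_mx h ('i%C *: N) ('i%C *: N).
    by have := adjoint_mxZ h_sesq 'i%C adjN; rewrite conjc_i scaleNr scalerN opprK.
  have hb_twist : (fun psi phi => h psi ('i%C *: (N *m phi))) =
      twist_form h ('i%C *: N).
    by apply: functional_extensionality => psi;
      apply: functional_extensionality => phi; rewrite /twist_form scalemxAl.
  rewrite hb_twist; split.
  + by apply: krein_product_twist; rewrite // unitmxZ // unitfE neq0Ci.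
  + apply: compatible_twist h_comp _ => a.
    by rewrite -scalemxAl -scalemxAr intertwineN.
Qed.
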